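(* Let $n\ge3$, let $p:[\mathcal Q:\xi]\to[\mathcal H:\partial]$ be a trivial fibration and $f:[\mathcal Q:\xi]\to[\mathcal G:\delta]$ a morphism of reduced $n$-crossed complexes, $\nabla^f=(p,f)$, and $P=\mathcal Q_{n-1}\times^{\mathcal Q_n}(\mathcal H_n\times\mathcal G_n)$ the degree $n-1$ group of $\mathcal Q^{\nabla^f_n}$. Define $i:\mathcal G_n\to P$ by $i(c)=[1,(1,c)]$ and $u:P\to\ker\xi_{n-2}\times_{\ker\partial_{n-2}}\mathcal H_{n-1}$ by $u([a,(b,c)])=(\xi_{n-1}(a),\,p_{n-1}(a)\partial_n(b))$. Then the sequence $$1\to\mathcal G_n\xrightarrow{i}P\xrightarrow{u}\ker\xi_{n-2}\times_{\ker\partial_{n-2}}\mathcal H_{n-1}\to1$$ is exact, and for every $k\le n-2$ the map $u_k:\mathcal Q_k\to\ker\xi_{k-1}\times_{\ker\partial_{k-1}}\mathcal H_k$, $x\mapsto(\xi_k(x),p_k(x))$, is surjective.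
   Context: A reduced $n$-crossed complex $[C:\partial]$ is a sequence of groups and homomorphisms $C_n\xrightarrow{\partial_n}C_{n-1}\to\cdots\to C_2\xrightarrow{\partial_2}C_1$ with an action of $C_1$ on each $C_k$ ($k\ge2$), such that $\partial_2$ is a crossed module, $C_k$ is abelian for $k\ge3$, each $\partial_k$ is $C_1$-equivariant, $\partial_{k-1}\partial_k$ is trivial, and $\partial_2(C_2)$ acts trivially on $C_k$ for $k\ge3$; morphisms are families of homomorphisms commuting with differentials and actions; products are degreewise. Homotopy groups: $\pi_1(C)=C_1/\partial_2(C_2)$, $\pi_k(C)=\ker\partial_k/\operatorname{im}\partial_{k+1}$ ($2\le k\le n-1$), $\pi_n(C)=\ker\partial_n$. Weak equivalence: isomorphism on all $\pi_k$; fibration: surjective in each degree; trivial fibration: both. For $p:[\mathcal Q:\xi]\to[\mathcal H:\partial]$, $\ker\xi_{k-1}\times_{\ker\partial_{k-1}}\mathcal H_k$ denotes the fibre product of $p_{k-1}:\ker\xi_{k-1}\to\ker\partial_{k-1}$ and $\partial_k:\mathcal H_k\to\ker\partial_{k-1}$, with conventions $\ker\xi_0=\ker\partial_0=1$, $\ker\xi_1=\mathcal Q_1$, $\ker\partial_1=\mathcal H_1$. The $n$-pushout $\mathcal Q^{\nabla_n}$ of $\nabla=(p,f):\mathcal Q\to\mathcal K=\mathcal H\times\mathcal G$: equal to $\mathcal Q$ in degrees $\le n-2$, degree $n$ group $\mathcal K_n$, degree $n-1$ group $P$, the quotient of the (semi)direct product $\mathcal Q_{n-1}\ltimes\mathcal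 K_n$ (for $n=3$, $\mathcal Q_2$ acts on $\mathcal K_3$ via $\nabla_1\circ\xi_2$; for $n\ge4$ direct) by the normal subgroup of elements $(\xi_n(x)^{-1},\nabla_n(x))$, $x\in\mathcal Q_n$, with elements written $[a,(b,c)]$; differentials $(b,c)\mapsto[1,(b,c)]$ and $[a,(b,c)]\mapsto\xi_{n-1}(a)$. *)

From Stdlib Require Import Arith.

Set Implicit Arguments.

Record Grp := {
  gcar :> Type;
  gmul : gcar -> gcar -> gcar;
  gone : gcar;
  ginv : gcar -> gcar;
  gassoc : forall x y z, gmul x (gmul y z) = gmul (gmul x y) z;
  gone_l : forall x, gmul gone x = x;
  ginv_l : forall x, gmul (ginv x) x = gone }.
Arguments gmul {g}.
Arguments gone {g}.
Arguments ginv {g}.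

Definition ishom (A B : Grp) (h : A -> B) : Prop :=
  forall x y, h (gmul x y) = gmul (h x) (h y).

(* ---------- Reduced n-crossed complexes ----------
   cc k = C_k (meaningful for 1 <= k <= n); cc 0 is forced trivial
   (degree 0 is not part of the data); dd k = partial_k : C_k -> C_{k-1};
   act k g x = x^g, the RIGHT action of g in C_1 on x in C_k (k >= 2). *)
Record ncc (n : nat) := {
  cc : nat -> Grp;
  dd : forall k, cc k -> cc (pred k);
  act : forall k, cc 1 -> cc k -> cc k;
  cc0_triv : forall x : cc 0, x = gone;
  dd_hom : forall k, 2 <= k <= n -> @ishom (cc k) (cc (pred k)) (dd k);
  act_hom : forall k g, 2 <= k <= n -> @ishom (cc k) (cc k) (act k g);
  act_one : forall k x, 2 <= k <= n -> act k gone x = x;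
  act_mul : forall k g h x, 2 <= k <= n -> act k (gmul g h) x = act k h (act k g x);
  cm_equiv : forall g x, 2 <= n -> dd 2 (act 2 g x) = gmul (ginv g) (gmul (dd 2 x) g);
  cm_peiffer : forall x y, 2 <= n -> act 2 (dd 2 y) x = gmul (ginv y) (gmul x y);
  ab : forall k (x y : cc k), 3 <= k <= n -> gmul x y = gmul y x;
  dd_equiv : forall k g x, 3 <= k <= n -> dd k (act k g x) = act (pred k) g (dd k x);
  dd_dd : forall k x, 3 <= k <= n -> dd (pred k) (dd k x) = gone;
  act_triv : forall k y x, 3 <= k <= n -> act k (dd 2 y) x = x }.
Arguments cc {n}.
Arguments dd {n} _ _ _.
Arguments act {n} _ _ _ _.

Record nmor (n : nat) (X Y : ncc n) := {
  mm : forall k, cc X k -> cc Y k;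
  mm_hom : forall k, 1 <= k <= n -> @ishom (cc X k) (cc Y k) (mm k);
  mm_dd : forall k x, 2 <= k <= n -> mm (pred k) (dd X k x) = dd Y k (mm k x);
  mm_act : forall k g x, 2 <= k <= n -> mm k (act X k g x) = act Y k (mm 1 g) (mm k x) }.
Arguments mm {n X Y} _ _ _.

(* ---------- Homotopy groups, weak equivalences, fibrations ----------
   pi_k = Z_k / B_k with Z_1 = C_1, Z_k = ker partial_k (k >= 2),
   B_k = im partial_{k+1} (k < n), B_n = 1. *)
Definition cyc n (X : ncc n) k (x : cc X k) : Prop :=
  k = 1 \/ dd X k x = gone.
Definition bnd n (X : ncc n) k (x : cc X k) : Prop :=
  (k < n /\ exists z : cc X (S k), dd X (S k) z = x) \/ (n <= k /\ x = gone).

(* the induced map Z_k/B_k -> Z'_k/B'_k is bijective, for all 1 <= k <= n *)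
Definition weq n (X Y : ncc n) (h : nmor X Y) : Prop :=
  forall k, 1 <= k <= n ->
    (forall y : cc Y k, cyc Y k y ->
       exists x : cc X k, cyc X k x /\ bnd Y k (gmul (ginv (mm h k x)) y)) /\
    (forall x x' : cc X k, cyc X k x -> cyc X k x' ->
       bnd Y k (gmul (ginv (mm h k x)) (mm h k x')) -> bnd X k (gmul (ginv x) x')).

Definition fibration n (X Y : ncc n) (h : nmor X Y) : Prop :=
  forall k, 1 <= k <= n -> forall y : cc Y k, exists x, mm h k x = y.

Definition trivfib n (X Y : ncc n) (h : nmor X Y) : Prop :=
  fibration h /\ weq h.

Section Pushout.
Variables (n : nat) (Q H G : ncc n) (p : nmor Q H) (f : nmor Q G).

Definition deg1 (j : nat) : cc Q j -> option (cc Q 1) :=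
  match j as j0 return cc Q j0 -> option (cc Q 1) with
  | 1 => fun y => Some y
  | _ => fun _ => None
  end.

Definition Pelt : Type := (cc Q (pred n) * (cc H n * cc G n))%type.

(* action of a in Q_{n-1} on K_n = H_n x G_n: via nabla_1 o xi_2 when n = 3,
   trivial when n >= 4 (direct product) *)
Definition Kact (a : cc Q (pred n)) (k : cc H n * cc G n) : cc H n * cc G n :=
  match deg1 (pred (pred n)) (dd Q (pred n) a) with
  | Some g => (act H n (mm p 1 g) (fst k), act G n (mm f 1 g) (snd k))
  | None => k
  end.

Definition Pmul (z z' : Pelt) : Pelt :=
  (gmul (fst z) (fst z'),
   (gmul (fst (Kact (fst z') (snd z))) (fst (snd z')),
    gmul (snd (Kact (fst z') (snd z))) (snd (snd z')))).

(* generator (xi_n(x)^{-1}, nabla_n(x)) of the normal subgroup *)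
Definition Nelt (x : cc Q n) : Pelt := (ginv (dd Q n x), (mm p n x, mm f n x)).

(* equality in the quotient P: [z] = [z'] iff z' in z N *)
Definition Prel (z z' : Pelt) : Prop := exists x : cc Q n, z' = Pmul z (Nelt x).

Definition iP (c : cc G n) : Pelt := (gone, (gone, c)).

Definition uP (z : Pelt) : cc Q (pred (pred n)) * cc H (pred n) :=
  (dd Q (pred n) (fst z), gmul (mm p (pred n) (fst z)) (dd H n (fst (snd z)))).

End Pushout.

(* ker xi_{k-1} x_{ker partial_{k-1}} H_k, with ker xi_0 = 1 (Q_0 trivial),
   ker xi_1 = Q_1 *)
Definition fibprod n (Q H : ncc n) (p : nmor Q H) k (q : cc Q (pred k)) (h : cc H k) : Prop :=
  (pred k <= 1 \/ dd Q (pred k) q = gone) /\ mm p (pred k) q = dd H k h.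

(* A trivial fibration p reflects boundaries and lifts cycles, hence lifts every
   pair (q, h) with xi q = 1 and p q = d h to some x with (xi x, p x) = (q, h).
   On P = Q_{n-1} x (H_n x G_n) / N the map u kills N because
   p(xi_n x) = d(p_n x) commutes with d(H_n) (Peiffer identity for n = 3,
   commutativity for n >= 4).  Lifting in degree n identifies ker u with the
   image of i (write b^-1 = p x, then [a, (b, c)] = [1, (1, c f(x))]), and
   injectivity of p on pi_n gives injectivity of i. *)
From Stdlib Require Import Arith Lia.

Set Implicit Arguments.
Arguments Kact : simpl never.

Section GroupTheory.
Context {G : Grp}.

Lemma gmulV (x : G) : gmul x (ginv x) = gone.
Proof.
  transitivity (gmul (gmul (ginv (ginv x)) (ginv x)) (gmul x (ginv x))).
  - rewrite ginv_l, gone_l; reflexivity.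
  - rewrite <- gassoc, (gassoc _ (ginv x) x), ginv_l, gone_l, ginv_l; reflexivity.
Qed.

Lemma gmul1 (x : G) : gmul x gone = x.
Proof. rewrite <- (ginv_l _ x), gassoc, gmulV, gone_l; reflexivity. Qed.

Lemma gmulKV (x y : G) : gmul x (gmul (ginv x) y) = y.
Proof. rewrite gassoc, gmulV, gone_l; reflexivity. Qed.

Lemma gmulVK (x y : G) : gmul (ginv x) (gmul x y) = y.
Proof. rewrite gassoc, ginv_l, gone_l; reflexivity. Qed.

Lemma gmul_cancel_l (a x y : G) : gmul a x = gmul a y -> x = y.
Proof. intro E. rewrite <- (gmulVK a x), E, gmulVK; reflexivity. Qed.

Lemma ginv_unique_r (x y : G) : gmul x y = gone -> y = ginv x.
Proof. intro E. rewrite <- (gmulVK x y), E, gmul1; reflexivity. Qed.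

Lemma ginv_unique_l (x y : G) : gmul x y = gone -> x = ginv y.
Proof. intro E. rewrite <- (gmul1 x), <- (gmulV y), gassoc, E, gone_l; reflexivity. Qed.

Lemma ginv_one : ginv (@gone G) = gone.
Proof. symmetry; apply ginv_unique_r, gone_l. Qed.

Lemma ginvK (x : G) : ginv (ginv x) = x.
Proof. symmetry; apply ginv_unique_r, ginv_l. Qed.

End GroupTheory.

Section Homomorphisms.
Variables (A B : Grp) (h : A -> B).
Hypothesis h_hom : ishom A B h.

Lemma hom_one : h gone = gone.
Proof. apply (gmul_cancel_l (h gone)). rewrite <- h_hom, gone_l, gmul1; reflexivity. Qed.

Lemma hom_inv (x : A) : h (ginv x) = ginv (h x).
Proof. apply ginv_unique_r. rewrite <- h_hom, gmulV. exact hom_one. Qed.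

End Homomorphisms.

Section ComplexMaps.
Variable n : nat.

Lemma dd_mul (X : ncc n) k x y :
  2 <= k <= n -> dd X k (gmul x y) = gmul (dd X k x) (dd X k y).
Proof. intro Hk; exact (dd_hom X Hk x y). Qed.

Lemma dd_one (X : ncc n) k : 2 <= k <= n -> dd X k gone = gone.
Proof. intro Hk; exact (hom_one (dd_hom X Hk)). Qed.

Lemma dd_inv (X : ncc n) k x : 2 <= k <= n -> dd X k (ginv x) = ginv (dd X k x).
Proof. intro Hk; exact (hom_inv (dd_hom X Hk) x). Qed.

Variables (X Y : ncc n) (h : nmor X Y).

Lemma mm_mul k x y : 1 <= k <= n -> mm h k (gmul x y) = gmul (mm h k x) (mm h k y).
Proof. intro Hk; exact (mm_hom h Hk x y). Qed.

Lemma mm_one k : 1 <= k <= n -> mm h k gone = gone.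
Proof. intro Hk; exact (hom_one (mm_hom h Hk)). Qed.

Lemma mm_inv k x : 1 <= k <= n -> mm h k (ginv x) = ginv (mm h k x).
Proof. intro Hk; exact (hom_inv (mm_hom h Hk) x). Qed.

End ComplexMaps.

Lemma cyc_one n (X : ncc n) k : 1 <= k <= n -> cyc X k gone.
Proof.
  intro Hk. destruct k as [|[|k]]; [lia | left; reflexivity | right; apply dd_one; lia].
Qed.

Section TrivialFibration.
Variables (n : nat) (Q H : ncc n) (p : nmor Q H).
Hypotheses (p_fib : fibration p) (p_weq : weq p).

Lemma weq_reflects_bnd k q :
  1 <= k <= n -> cyc Q k q -> bnd H k (mm p k q) -> bnd Q k q.
Proof.
  intros Hk Hq Hb. destruct (p_weq Hk) as [_ p_inj].
  rewrite <- (gone_l _ q), <- ginv_one.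
  apply (p_inj gone q (cyc_one Q Hk) Hq).
  rewrite mm_one, ginv_one, gone_l by lia. exact Hb.
Qed.

Lemma trivfib_lift_cycle k c :
  2 <= k <= n -> dd H k c = gone -> exists y, dd Q k y = gone /\ mm p k y = c.
Proof.
  intros Hk Hc. destruct (p_weq (k := k) ltac:(lia)) as [p_sur _].
  destruct (p_sur c (or_intror Hc)) as [y [[Hk1 | Hy] Hb]]; [lia |].
  destruct Hb as [[Hlt [w Hw]] | [_ Hw]].
  - destruct (p_fib (k := S k) ltac:(lia) w) as [w' Hw'].
    exists (gmul y (dd Q (S k) w')). split.
    + rewrite dd_mul, Hy, gone_l by lia. apply (dd_dd Q (k := S k)); lia.
    + rewrite mm_mul by lia.
      rewrite (mm_dd p (k := S k)) by lia. cbn [pred].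
      rewrite Hw', Hw. apply gmulKV.
  - exists y. split; [exact Hy |].
    apply ginv_unique_r in Hw. rewrite ginvK in Hw. symmetry; exact Hw.
Qed.

Lemma trivfib_lift k q h :
  1 <= k <= n -> fibprod p k q h -> exists x, dd Q k x = q /\ mm p k x = h.
Proof.
  intros Hk [Hq Hqh]. destruct k as [|[|k]]; [lia | |].
  - destruct (p_fib Hk h) as [x Hx]. exists x. split; [| exact Hx].
    rewrite (cc0_triv Q q). apply cc0_triv.
  - cbn [pred] in Hq, Hqh.
    assert (Hbq : bnd Q (S k) q).
    { apply weq_reflects_bnd; [lia | |].
      - destruct Hq as [Hq | Hq]; [left; lia | right; exact Hq].
      - left. split; [lia | exists h; symmetry; exact Hqh]. }
    destruct Hbq as [[_ [z Hz]] | [Hle _]]; [| lia].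
    destruct (trivfib_lift_cycle (k := S (S k)) (gmul (ginv (mm p (S (S k)) z)) h))
      as [y [Hy Hpy]]; [lia | |].
    { rewrite dd_mul, dd_inv by lia.
      rewrite <- (mm_dd p (k := S (S k))) by lia. cbn [pred].
      rewrite Hz, Hqh. apply ginv_l. }
    exists (gmul z y). split.
    + rewrite dd_mul, Hz, Hy, gmul1 by lia. reflexivity.
    + rewrite mm_mul, Hpy by lia. apply gmulKV.
Qed.

End TrivialFibration.

Section Pushout.
Variables (n : nat) (Q H G : ncc n) (p : nmor Q H) (f : nmor Q G).
Hypothesis n_ge3 : 3 <= n.

Lemma Kact_id_of_cycle a k : dd Q (pred n) a = gone -> Kact p f a k = k.
Proof.
  intro Ha. destruct (Nat.eq_dec n 3) as [En | Hne].
  - subst n. unfold Kact. cbn. cbn [pred] in Ha. rewrite Ha, !mm_one by lia.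
    rewrite !act_one by lia. destruct k; reflexivity.
  - destruct n as [|[|[|[|m]]]]; [lia .. | reflexivity].
Qed.

Lemma Kact_conj a k :
  gmul (mm p (pred n) a) (dd H n (fst (Kact p f a k))) =
  gmul (dd H n (fst k)) (mm p (pred n) a).
Proof.
  destruct (Nat.eq_dec n 3) as [En | Hne].
  - subst n. unfold Kact. cbn.
    rewrite (dd_equiv H (k := 3)) by lia. cbn [pred].
    rewrite (mm_dd p (k := 2)) by lia. cbn [pred].
    rewrite cm_peiffer by lia. apply gmulKV.
  - destruct n as [|[|[|[|m]]]]; [lia .. |]. apply ab; lia.
Qed.

Lemma Kact_one k : Kact p f gone k = k.
Proof. apply Kact_id_of_cycle, dd_one; lia. Qed.

Lemma Kact_Nelt x k : Kact p f (ginv (dd Q n x)) k = k.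
Proof.
  apply Kact_id_of_cycle. rewrite dd_inv, (dd_dd Q (k := n)) by lia. apply ginv_one.
Qed.

Lemma Pmul_Nelt a b c x :
  Pmul p f (a, (b, c)) (Nelt p f x) =
  (gmul a (ginv (dd Q n x)), (gmul b (mm p n x), gmul c (mm f n x))).
Proof. unfold Pmul, Nelt; cbn [fst snd]. rewrite Kact_Nelt. reflexivity. Qed.

Lemma mm_dd_commute x b :
  gmul (mm p (pred n) (dd Q n x)) (dd H n b) = gmul (dd H n b) (mm p (pred n) (dd Q n x)).
Proof.
  pose proof (Kact_conj (dd Q n x) (b, gone)) as E.
  rewrite Kact_id_of_cycle in E by (apply dd_dd; lia). exact E.
Qed.

Lemma uP_Prel (z z' : Pelt Q H G) : Prel p f z z' -> uP p z = uP p z'.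
Proof.
  intros [x ->]. destruct z as [a [b c]].
  rewrite Pmul_Nelt. unfold uP; cbn [fst snd]. f_equal.
  - rewrite dd_mul, dd_inv, (dd_dd Q (k := n)), ginv_one, gmul1 by lia. reflexivity.
  - rewrite mm_mul, mm_inv, dd_mul, <- (mm_dd p (k := n)) by lia.
    rewrite <- mm_dd_commute, <- gassoc, gmulVK. reflexivity.
Qed.

Lemma uP_fibprod (z : Pelt Q H G) : fibprod p (pred n) (fst (uP p z)) (snd (uP p z)).
Proof.
  destruct z as [a [b c]]. unfold fibprod, uP; cbn [fst snd]. split.
  - destruct (le_lt_dec n 3); [left; lia | right; apply dd_dd; lia].
  - rewrite (mm_dd p (k := pred n)), dd_mul, (dd_dd H (k := n)), gmul1 by lia.
    reflexivity.
Qed.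

Lemma uP_mul (z z' : Pelt Q H G) :
  uP p (Pmul p f z z') =
  (gmul (fst (uP p z)) (fst (uP p z')), gmul (snd (uP p z)) (snd (uP p z'))).
Proof.
  destruct z as [a [b c]], z' as [a' [b' c']]. unfold uP, Pmul; cbn [fst snd]. f_equal.
  - apply dd_mul; lia.
  - rewrite mm_mul, dd_mul by lia.
    pose proof (Kact_conj a' (b, c)) as E. cbn [fst] in E.
    rewrite <- !gassoc, (gassoc _ (mm p (pred n) a')), E, <- gassoc. reflexivity.
Qed.

Lemma iP_mul c c' : Prel p f (Pmul p f (iP Q H G c) (iP Q H G c')) (iP Q H G (gmul c c')).
Proof.
  exists gone. unfold Pmul, Nelt, iP; cbn [fst snd].
  rewrite Kact_one, Kact_Nelt; cbn [fst snd].
  rewrite dd_one, !mm_one, ginv_one, !gone_l, !gmul1 by lia. reflexivity.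
Qed.

Lemma uP_iP c : uP p (iP Q H G c) = (gone, gone).
Proof.
  unfold uP, iP; cbn [fst snd].
  rewrite dd_one, mm_one, dd_one, gone_l by lia. reflexivity.
Qed.

Hypothesis p_trivfib : trivfib p.

Lemma iP_inj c c' : Prel p f (iP Q H G c) (iP Q H G c') -> c = c'.
Proof.
  destruct p_trivfib as [_ p_weq].
  intros [x Hx]. unfold iP in Hx. rewrite Pmul_Nelt in Hx.
  injection Hx as Hdx Hpx Hfx. rewrite gone_l in Hdx, Hpx.
  assert (Hx1 : x = gone).
  { assert (Hbx : bnd Q n x).
    { apply (weq_reflects_bnd p_weq); [lia | |].
      - right. rewrite <- (ginvK (dd Q n x)), <- Hdx. apply ginv_one.
      - right. split; [lia | symmetry; exact Hpx]. }
    destruct Hbx as [[Hlt _] | [_ Hx1]]; [lia | exact Hx1]. }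
  rewrite Hfx, Hx1, mm_one, gmul1 by lia. reflexivity.
Qed.

Lemma uP_ker (z : Pelt Q H G) : uP p z = (gone, gone) <-> exists c, Prel p f z (iP Q H G c).
Proof.
  destruct p_trivfib as [p_fib p_weq]. split.
  - destruct z as [a [b c]]. unfold uP; cbn [fst snd]. intro Hu.
    injection Hu as Ha Hb.
    destruct (trivfib_lift p_fib p_weq (k := n) (q := a) (h := ginv b))
      as [x [Hdx Hpx]]; [lia | |].
    { split; [right; exact Ha |].
      rewrite dd_inv by lia. exact (ginv_unique_l _ _ Hb). }
    exists (gmul c (mm f n x)), x. unfold iP. rewrite Pmul_Nelt, Hdx, Hpx, !gmulV.
    reflexivity.
  - intros [c Hc]. rewrite (uP_Prel Hc). apply uP_iP.
Qed.

Lemma uP_surj q h : fibprod p (pred n) q h -> exists z : Pelt Q H G, uP p z = (q, h).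
Proof.
  destruct p_trivfib as [p_fib p_weq]. intro Hf.
  destruct (trivfib_lift p_fib p_weq (k := pred n) ltac:(lia) Hf) as [x [Hdx Hpx]].
  exists (x, (gone, gone)). unfold uP; cbn [fst snd].
  rewrite Hdx, Hpx, dd_one, gmul1 by lia. reflexivity.
Qed.

End Pushout.

Theorem mainTheorem3 (n : nat) (Q H G : ncc n) (p : nmor Q H) (f : nmor Q G) :
  3 <= n -> trivfib p ->
  (* i is a homomorphism into P *)
  (forall c c' : cc G n, Prel p f (Pmul p f (iP Q H G c) (iP Q H G c')) (iP Q H G (gmul c c'))) /\
  (* i is injective *)
  (forall c c' : cc G n, Prel p f (iP Q H G c) (iP Q H G c') -> c = c') /\
  (* u is well defined on P, lands in the fibre product, and is a homomorphism *)
  (forall z z' : Pelt Q H G, Prel p f z z' -> uP p z = uP p z') /\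
  (forall z : Pelt Q H G, fibprod p (pred n) (fst (uP p z)) (snd (uP p z))) /\
  (forall z z' : Pelt Q H G,
     uP p (Pmul p f z z') =
     (gmul (fst (uP p z)) (fst (uP p z')), gmul (snd (uP p z)) (snd (uP p z')))) /\
  (* exactness at P: ker u = im i *)
  (forall z : Pelt Q H G, uP p z = (gone, gone) <-> exists c, Prel p f z (iP Q H G c)) /\
  (* u is surjective *)
  (forall q h, fibprod p (pred n) q h -> exists z : Pelt Q H G, uP p z = (q, h)) /\
  (* u_k surjective for k <= n-2 *)
  (forall k, 1 <= k <= n - 2 -> forall q h, fibprod p k q h ->
     exists x : cc Q k, dd Q k x = q /\ mm p k x = h).
Proof.
  intros Hn Hp.
  split; [exact (iP_mul p f Hn) |].
  split; [exact (iP_inj Hn Hp) |].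
  split; [exact (uP_Prel Hn) |].
  split; [exact (uP_fibprod p Hn) |].
  split; [exact (uP_mul p f Hn) |].
  split; [exact (uP_ker f Hn Hp) |].
  split; [exact (uP_surj G Hn Hp) |].
  intros k Hk q h. destruct Hp as [p_fib p_weq].
  apply (trivfib_lift p_fib p_weq). lia.
Qed.
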